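(* Let $\beta_1,\beta_2$ be complex numbers with $\mathrm{Re}(\beta_j)\ge\gamma\ge1$ for $j=1,2$. Let $\psi_j(z)=1/(z+\beta_j)$ for $\mathrm{Re}(z)\ge0$ and $\theta=\psi_1\circ\psi_2$. Then for all $z,w\in\mathbb C$ with $\mathrm{Re}(z)\ge0$ and $\mathrm{Re}(w)\ge0$, $$|\theta(z)-\theta(w)|\le(\gamma^2+1)^{-2}|z-w|.$$ *)

From HB Require Import structures.
From mathcomp Require Import all_boot all_order all_algebra.
From mathcomp Require Import complex.
From mathcomp Require Import reals.
Set Implicit Arguments. Unset Strict Implicit. Unset Printing Implicit Defensive.
Import Order.TTheory GRing.Theory Num.Theory.
Local Open Scope ring_scope.
Local Open Scope complex_scope.

Definition psi (R : rcfType) (beta : R[i]) (z : R[i]) : R[i] := (z + beta)^-1.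

Definition theta (R : rcfType) (b1 b2 : R[i]) (z : R[i]) : R[i] :=
  psi b1 (psi b2 z).

From HB Require Import structures.
From mathcomp Require Import all_boot all_order all_algebra.
From mathcomp Require Import complex.
From mathcomp Require Import reals.
From mathcomp Require Import ring lra.
Set Implicit Arguments. Unset Strict Implicit. Unset Printing Implicit Defensive.
Import Order.TTheory GRing.Theory Num.Theory.
Local Open Scope ring_scope.
Local Open Scope complex_scope.

(** Since [psi b1 (psi b2 z) = u / (1 + b1 u)] with [u = z + b2], one gets
  [theta z - theta w = (z - w) / ((1 + b1 u) (1 + b1 v))] with [v = w + b2].
  Both factors of the denominator have modulus at least [gamma^2 + 1]: for
  [a = x + i b] and [c = y + i d] with real parts at least [gamma >= 1],
  [|1 + a c|^2 = (1 + x y)^2 + (b d)^2 + (x d)^2 + (y b)^2 - 2 b d], where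
  [(x d)^2 + (y b)^2 >= 2 x y b d >= 2 b d] when [b d >= 0], as [x y >= 1]. *)

Lemma two_mul_le_sqr_sum (R : realFieldType) (x y b d : R) : 1 <= x * y ->
  2 * (b * d) <= (b * d) ^+ 2 + (x * d) ^+ 2 + (y * b) ^+ 2.
Proof.
move=> xy_ge1; have [bd_ge0 | bd_lt0] := lerP 0 (b * d); last first.
  by apply: le_trans (_ : 0 <= _); [nra | rewrite !addr_ge0 ?sqr_ge0].
have amgm : 2 * ((x * d) * (y * b)) <= (x * d) ^+ 2 + (y * b) ^+ 2.
  by have := sqr_ge0 (x * d - y * b); nra.
have : 2 * (b * d) <= 2 * ((x * d) * (y * b)) by nra.
by have := sqr_ge0 (b * d); lra.
Qed.

Lemma sqr_norm_1_addM_ge (R : realFieldType) (g x b y d : R) :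
  1 <= g -> g <= x -> g <= y ->
  (g ^+ 2 + 1) ^+ 2 <= (1 + (x * y - b * d)) ^+ 2 + (x * d + b * y) ^+ 2.
Proof.
move=> g_ge1 gx gy.
have gxy : g ^+ 2 <= x * y by rewrite expr2; apply: ler_pM; lra.
have -> : (1 + (x * y - b * d)) ^+ 2 + (x * d + b * y) ^+ 2 =
  (1 + x * y) ^+ 2 + ((b * d) ^+ 2 + (x * d) ^+ 2 + (y * b) ^+ 2 - 2 * (b * d)).
  by ring.
apply: le_trans (_ : (1 + x * y) ^+ 2 <= _).
  by rewrite addrC !expr2; apply: ler_pM; nra.
by rewrite lerDl subr_ge0; apply: two_mul_le_sqr_sum; nra.
Qed.

Lemma norm_1_addM_ge (R : rcfType) (g : R) (a c : R[i]) : 1 <= g ->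
  g <= complex.Re a -> g <= complex.Re c -> (g ^+ 2 + 1)%:C <= `|1 + a * c|.
Proof.
case: a => x b; case: c => y d /= g_ge1 gx gy.
rewrite normc_def lecR /= add0r.
apply: le_trans (ler_wsqrtr (sqr_norm_1_addM_ge b d g_ge1 gx gy)).
by rewrite sqrtr_sqr ger0_norm // addr_ge0 ?sqr_ge0.
Qed.

Lemma Re_gt0_neq0 (R : rcfType) (c : R[i]) : 0 < complex.Re c -> c != 0.
Proof. by apply: contraTneq => ->; rewrite ltxx. Qed.

Lemma theta_sub (R : rcfType) (b1 b2 z w : R[i]) :
  z + b2 != 0 -> w + b2 != 0 ->
  1 + b1 * (z + b2) != 0 -> 1 + b1 * (w + b2) != 0 ->
  theta b1 b2 z - theta b1 b2 w =
    (z - w) / ((1 + b1 * (z + b2)) * (1 + b1 * (w + b2))).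
Proof.
move=> zb2 wb2 Pz Pw; rewrite /theta /psi.
by field; rewrite Pz Pw zb2 wb2.
Qed.

Theorem lemma7p1 (R : realType) (gamma : R) (b1 b2 : R[i])
  (hgamma : 1 <= gamma)
  (hb1 : gamma <= complex.Re b1) (hb2 : gamma <= complex.Re b2)
  (z w : R[i]) (hz : 0 <= complex.Re z) (hw : 0 <= complex.Re w) :
  `|theta b1 b2 z - theta b1 b2 w| <=
    ((gamma ^+ 2 + 1) ^- 2)%:C * `|z - w|.
Proof.
have Re_zb2 : gamma <= complex.Re (z + b2) by rewrite raddfD /=; lra.
have Re_wb2 : gamma <= complex.Re (w + b2) by rewrite raddfD /=; lra.
have kR_gt0 : 0 < gamma ^+ 2 + 1 by rewrite ltr_pwDr ?sqr_ge0.
have k_gt0 : 0 < (gamma ^+ 2 + 1)%:C by rewrite ltcR.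
have Pz := norm_1_addM_ge hgamma hb1 Re_zb2.
have Pw := norm_1_addM_ge hgamma hb1 Re_wb2.
have Pz_neq0 : 1 + b1 * (z + b2) != 0 by rewrite -normr_gt0 (lt_le_trans k_gt0).
have Pw_neq0 : 1 + b1 * (w + b2) != 0 by rewrite -normr_gt0 (lt_le_trans k_gt0).
have zb2_neq0 : z + b2 != 0 by apply: Re_gt0_neq0; lra.
have wb2_neq0 : w + b2 != 0 by apply: Re_gt0_neq0; lra.
rewrite theta_sub //.
rewrite normrM normfV normrM mulrC ler_wpM2r //.
rewrite rmorphV ?unitfE ?expf_neq0 ?gt_eqF // rmorphXn.
rewrite lef_pV2 ?posrE ?mulr_gt0 ?exprn_gt0 ?(lt_le_trans k_gt0) //.
by rewrite expr2 ler_pM // ltW.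
Qed.
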